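(* Let $E,J,R,Q\in\mathbb{R}^{n\times n}$ with $J=-J^T$, $R=R^T\ge0$ and $Q^TE=E^TQ\ge0$. Then the pencil $sE-(J-R)Q$ is regular if and only if $\ker E\cap\ker(Q^TJQ)\cap\ker(Q^TRQ)=\{0\}$. Furthermore, if this holds and additionally $\ker Q\subseteq\ker E$, then $[E,(J-R)Q]$ is stable.
   Context: A pencil $sE-A$ is regular if $\det(sE-A)$ is not the zero polynomial. For $E,A\in\mathbb{R}^{n\times n}$, $[E,A]$ is stable if every $x\in C^\infty(\mathbb{R},\mathbb{R}^n)$ with $\tfrac{d}{dt}Ex=Ax$ is bounded on $[0,\infty)$. *)

From mathcomp Require Import all_boot all_order all_algebra.
From mathcomp Require Import all_classical all_reals all_analysis.
Set Implicit Arguments. Unset Strict Implicit. Unset Printing Implicit Defensive.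
Import Order.TTheory GRing.Theory Num.Theory.
Local Open Scope ring_scope.

(* positive semidefinite quadratic form: v^T M v >= 0 (symmetry is a separate hypothesis) *)
Definition psd (R : realType) (n : nat) (M : 'M[R]_n) : Prop :=
  forall v : 'cV[R]_n, 0 <= (v^T *m M *m v) 0 0.

Definition pencil (R : realType) (n : nat) (E A : 'M[R]_n) : 'M[{poly R}]_n :=
  \matrix_(i, j) ('X * (E i j)%:P - (A i j)%:P).

Definition regular_pencil (R : realType) (n : nat) (E A : 'M[R]_n) : Prop :=
  \det (pencil E A) != 0.

Definition smooth_vec (R : realType) (n : nat) (x : R -> 'cV[R]_n) : Prop :=
  forall (i : 'I_n) (k : nat) (t : R),
    derivable (derive1n k (fun s => x s i 0)) t 1.

Definition solves_dae (R : realType) (n : nat) (E A : 'M[R]_n) (x : R -> 'cV[R]_n) : Prop :=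
  forall (i : 'I_n) (t : R),
    derivable (fun s => (E *m x s) i 0) t 1 /\
    derive1 (fun s => (E *m x s) i 0) t = (A *m x t) i 0.

Definition stable_pencil (R : realType) (n : nat) (E A : 'M[R]_n) : Prop :=
  forall x : R -> 'cV[R]_n, smooth_vec x -> solves_dae E A x ->
    exists M : R, forall t : R, 0 <= t -> forall i : 'I_n, `|x t i 0| <= M.

From mathcomp Require Import all_boot all_order all_algebra.
From mathcomp Require Import all_classical all_reals all_analysis.
From mathcomp Require Import lra ring.
Set Implicit Arguments. Unset Strict Implicit. Unset Printing Implicit Defensive.
Import Order.TTheory GRing.Theory Num.Theory.
Local Open Scope ring_scope.

(* Port-Hamiltonian descriptor systems  d/dt (E x) = (J - R) Q x  with J skew,
   R >= 0 and Q^T E = E^T Q >= 0.  Two identities drive everything: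
   - dissipation: u^T (J - R) u = - u^T R u <= 0, because u^T J u = 0;
   - the energy x^T Q^T E x is therefore nonincreasing along solutions.  If v != 0 lies in ker E, ker Q^TJQ and ker Q^TRQ, then v (when
   Qv = 0) or Qv (otherwise) is a kernel vector of sE - (J-R)Q or of its
   transpose, for every s.  Conversely, if det(sE - (J-R)Q) = 0, dissipation
   shows that any kernel vector x at s > 0 satisfies s E x = J Q x and lies in
   ker Q^TJQ and ker Q^TRQ; with a left inverse [L1 L2] of the injective
   stacked matrix (E; Q^TJQ; Q^TRQ) this makes every s > 0 an eigenvalue of
   L1 J Q, impossible for a monic characteristic polynomial.  Q is then invertible and (E; (J-R)Q) injective, so x is a fixed
   linear image of (Q^T E x, Q^T E x'); both are bounded by the energies of x
   and of its derivative x' (again a solution), which do not increase. *)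

Lemma discriminant_le (R : realFieldType) (a b c : R) : 0 <= c ->
  (forall t : R, 0 <= a + 2 * t * b + t ^+ 2 * c) -> b ^+ 2 <= a * c.
Proof.
move=> c0 H; have [cp|] := ltP 0 c.
  have hu : c * (b / c) = b by rewrite mulrC divfK // gt_eqF.
  move: (H (- (b / c))) hu; set u := b / c; nra.
move=> cle; have -> : c = 0 by apply/eqP; rewrite eq_le cle c0.
have [->|bn] := eqVneq b 0; first by rewrite expr0n /= mulr0.
have hu : (2 * b) * ((a + 1) / (2 * b)) = a + 1.
  by rewrite mulrC divfK // mulf_neq0 // pnatr_eq0.
move: (H (- ((a + 1) / (2 * b)))) hu; set u := (a + 1) / (2 * b); nra.
Qed.

Lemma norm_le_1_add_sqr (R : realFieldType) (a : R) : `|a| <= 1 + a ^+ 2.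
Proof. by have [a0|a0] := leP 0 a; [rewrite ger0_norm //|rewrite ltr0_norm //]; nra. Qed.

Lemma poly_eq0_of_pos_roots (R : numDomainType) (p : {poly R}) :
  (forall x : R, 0 < x -> p.[x] = 0) -> p = 0.
Proof.
move=> H; apply/eqP/negPn/negP => pn.
set rs := [seq (i.+1)%:R | i <- iota 0 (size p)] : seq R.
have roots_rs : all (root p) rs.
  by apply/allP => x /mapP [i _ ->]; apply/rootP/H/ltr0Sn.
have uniq_rs : uniq rs.
  by rewrite map_inj_uniq ?iota_uniq // => i j /eqP; rewrite eqr_nat => /eqP [].
by have := max_poly_roots pn roots_rs uniq_rs; rewrite size_map size_iota ltnn.
Qed.

Section Kernels.
Variable R : realFieldType.

Lemma gram_eq0 m (u : 'cV[R]_m) : (u^T *m u) 0 0 = 0 -> u = 0.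
Proof.
have -> : (u^T *m u) 0 0 = \sum_i u i 0 ^+ 2.
  by rewrite mxE; apply: eq_bigr => i _; rewrite mxE expr2.
move=> h; apply/matrixP => i j; rewrite (ord1 j) mxE; apply/eqP.
by rewrite -sqrf_eq0; apply/eqP/(psumr_eq0P _ h) => // k _; rewrite sqr_ge0.
Qed.

Lemma det0_kernel n (M : 'M[R]_n) :
  \det M = 0 -> exists2 v : 'cV[R]_n, v != 0 & M *m v = 0.
Proof.
move=> h; have /det0P [v vn hv] : \det M^T == 0 by rewrite det_tr h.
by exists v^T; rewrite ?trmx_eq0 // -(trmxK M) -trmx_mul hv trmx0.
Qed.

Lemma kernel_det0 n (M : 'M[R]_n) (v : 'cV[R]_n) :
  v != 0 -> M *m v = 0 -> \det M = 0.
Proof.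
move=> vn hv; apply/eqP; rewrite -det_tr; apply/det0P.
by exists v^T; rewrite ?trmx_eq0 // -trmx_mul hv trmx0.
Qed.

Lemma unitmx_of_injective n (M : 'M[R]_n) :
  (forall v : 'cV[R]_n, M *m v = 0 -> v = 0) -> M \in unitmx.
Proof.
move=> inj; rewrite unitmxE unitfE; apply/eqP => /det0_kernel [v vn hv].
by rewrite (inj v hv) eqxx in vn.
Qed.

(* Two matrices without common kernel vector admit L1, L2 with L1 A + L2 B = 1:
   the stacked matrix K = (A; B) is injective, so K^T K is invertible. *)
Lemma left_inverse_pair p q n (A : 'M[R]_(p, n)) (B : 'M[R]_(q, n)) :
  (forall w : 'cV[R]_n, A *m w = 0 -> B *m w = 0 -> w = 0) ->
  exists L1 : 'M[R]_(n, p), exists L2 : 'M[R]_(n, q), L1 *m A + L2 *m B = 1%:M.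
Proof.
move=> inj; set K := col_mx A B.
have KTK : K^T *m K \in unitmx.
  apply: unitmx_of_injective => w hw.
  have /gram_eq0 : ((K *m w)^T *m (K *m w)) 0 0 = 0.
    by rewrite trmx_mul -mulmxA (mulmxA K^T) hw mulmx0 mxE.
  by rewrite mul_col_mx => /eqP; rewrite col_mx_eq0 => /andP [/eqP ? /eqP ?]; apply: inj.
exists (lsubmx (invmx (K^T *m K) *m K^T)), (rsubmx (invmx (K^T *m K) *m K^T)).
by rewrite -mul_row_col hsubmxK -mulmxA mulVmx.
Qed.

Lemma skew_form0 n (J : 'M[R]_n) (u : 'cV[R]_n) : J^T = - J -> u^T *m J *m u = 0.
Proof.
move=> hJ; set t := u^T *m J *m u.
have tT : t^T = - t by rewrite /t !trmx_mul trmxK hJ mulNmx mulmxN mulmxA.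
clearbody t; have := congr1 (fun M : 'M[R]_1 => M 0 0) tT; rewrite !mxE => h.
by apply/matrixP => i j; rewrite (ord1 i) (ord1 j) [RHS]mxE; lra.
Qed.

Lemma dissipation n (J Rm : 'M[R]_n) (u : 'cV[R]_n) : J^T = - J ->
  (u^T *m ((J - Rm) *m u)) 0 0 = - (u^T *m Rm *m u) 0 0.
Proof.
by move=> hJ; rewrite mulmxBl mulmxBr !mulmxA (skew_form0 u hJ) sub0r [LHS]mxE.
Qed.

End Kernels.

Section Semidefinite.
Variables (R : realType) (n : nat) (P : 'M[R]_n).
Hypotheses (P_sym : P^T = P) (P_psd : psd P).

Lemma form_sym (v w : 'cV[R]_n) : (v^T *m P *m w) 0 0 = (w^T *m P *m v) 0 0.
Proof.
have -> : v^T *m P *m w = (w^T *m P *m v)^T by rewrite !trmx_mul trmxK P_sym mulmxA.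
by rewrite mxE.
Qed.

Lemma psd_cauchy_schwarz (v w : 'cV[R]_n) :
  ((w^T *m P *m v) 0 0) ^+ 2 <= (w^T *m P *m w) 0 0 * (v^T *m P *m v) 0 0.
Proof.
rewrite mulrC; apply: discriminant_le => [|t]; first exact: P_psd.
have trD : (v + t *: w)^T = v^T + t *: w^T by apply/matrixP => i j; rewrite !mxE.
have := P_psd (v + t *: w); have := form_sym v w.
rewrite trD !mulmxDl !mulmxDr -!scalemxAl -!scalemxAr.
move: (v^T *m P *m v) (w^T *m P *m w) (w^T *m P *m v) (v^T *m P *m w) => a c b b'.
by rewrite !mxE => -> h; apply: (le_trans h); rewrite le_eqVlt; apply/orP; left; apply/eqP; ring.
Qed.

Lemma form_delta (v : 'cV[R]_n) j :
  ((delta_mx j 0 : 'cV[R]_n)^T *m P *m v) 0 0 = (P *m v) j 0.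
Proof. by rewrite trmx_delta -mulmxA -rowE !mxE. Qed.

Lemma psd_diag j : 0 <= P j j.
Proof. by have := P_psd (delta_mx j 0); rewrite form_delta -colE mxE. Qed.

Lemma psd_entry (v : 'cV[R]_n) j :
  ((P *m v) j 0) ^+ 2 <= P j j * (v^T *m P *m v) 0 0.
Proof.
by have := psd_cauchy_schwarz v (delta_mx j 0); rewrite !form_delta -colE [col j P j 0]mxE.
Qed.

Lemma psd_form_eq0 (v : 'cV[R]_n) : (v^T *m P *m v) 0 0 = 0 -> P *m v = 0.
Proof.
move=> h0; apply/matrixP => j k; rewrite (ord1 k) [RHS]mxE.
have := psd_entry v j; rewrite h0 mulr0 => h.
by apply/eqP; rewrite -sqrf_eq0 eq_le h sqr_ge0.
Qed.

End Semidefinite.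

Lemma det_horner (R : comNzRingType) n (M : 'M[{poly R}]_n) (x : R) :
  (\det M).[x] = \det (map_mx (fun p => p.[x]) M).
Proof. by rewrite -horner_evalE -det_map_mx. Qed.

Lemma pencil_horner (R : realType) n (E A : 'M[R]_n) (x : R) :
  (\det (pencil E A)).[x] = \det (x *: E - A).
Proof.
rewrite det_horner; congr (\det _); apply/matrixP => i j; rewrite !mxE.
by rewrite hornerD hornerN mulrC hornerMX !hornerC mulrC.
Qed.

Lemma char_poly_horner (R : comNzRingType) n (M : 'M[R]_n) (x : R) :
  (char_poly M).[x] = \det (x%:M - M).
Proof.
rewrite /char_poly det_horner; congr (\det _); apply/matrixP => i j; rewrite !mxE.
by case: (i == j); rewrite /= ?mulr1n ?mulr0n hornerD hornerN ?hornerX ?hornerC.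
Qed.

Definition common_kernel_trivial (R : realType) n (E J Rm Q : 'M[R]_n) : Prop :=
  forall v : 'cV[R]_n, E *m v = 0 -> (Q^T *m J *m Q) *m v = 0 ->
    (Q^T *m Rm *m Q) *m v = 0 -> v = 0.

Section Regularity.
Variables (R : realType) (n : nat) (E J Rm Q : 'M[R]_n).
Hypotheses (hJ : J^T = - J) (hR : Rm^T = Rm) (hRpsd : psd Rm).
Hypotheses (hQE : Q^T *m E = E^T *m Q) (hQEpsd : psd (Q^T *m E)).

Lemma QE_sym : (Q^T *m E)^T = Q^T *m E.
Proof. by rewrite trmx_mul trmxK hQE. Qed.

Lemma pencil_singular (v : 'cV[R]_n) (x : R) : v != 0 -> E *m v = 0 ->
  (Q^T *m J *m Q) *m v = 0 -> (Q^T *m Rm *m Q) *m v = 0 ->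
  \det (x *: E - (J - Rm) *m Q) = 0.
Proof.
move=> vn hE hJ0 hR0; have [Qv0|Qvn] := eqVneq (Q *m v) 0.
  apply: (kernel_det0 vn).
  by rewrite mulmxBl -scalemxAl hE -mulmxA Qv0 mulmx0 scaler0 subr0.
rewrite -det_tr; apply: (kernel_det0 Qvn).
have EQv : E^T *m (Q *m v) = 0 by rewrite mulmxA -hQE -mulmxA hE mulmx0.
rewrite linearB /= linearZ /= trmx_mul linearB /= hJ hR.
rewrite mulmxBl -scalemxAl EQv scaler0 sub0r mulmxBr mulmxN mulmxBl mulNmx.
by rewrite !mulmxA hJ0 hR0 subr0 !oppr0.
Qed.

(* A kernel vector of sE - (J-R)Q at s > 0 is a kernel vector of Q^TJQ and
   Q^TRQ with  s E x = J Q x:  the energy identity forces R Q x = 0. *)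
Lemma pencil_kernel (s : R) (x : 'cV[R]_n) : 0 < s ->
  (s *: E - (J - Rm) *m Q) *m x = 0 ->
  [/\ s *: (E *m x) = J *m (Q *m x), (Q^T *m J *m Q) *m x = 0
    & (Q^T *m Rm *m Q) *m x = 0].
Proof.
move=> sp h; set u := Q *m x.
have hEx : s *: (E *m x) = (J - Rm) *m u.
  by apply/eqP; rewrite -subr_eq0 scalemxAl /u mulmxA -mulmxBl h.
have balance : s * (x^T *m (Q^T *m E) *m x) 0 0 = - (u^T *m Rm *m u) 0 0.
  rewrite -(dissipation _ u hJ) -hEx -scalemxAr [in RHS]mxE.
  by rewrite /u trmx_mul !mulmxA.
have := hQEpsd x; have := hRpsd u => h1 h2.
have /(psd_form_eq0 hR hRpsd) hRu : (u^T *m Rm *m u) 0 0 = 0 by nra.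
have hx : (x^T *m (Q^T *m E) *m x) 0 0 = 0 by nra.
have hJu : s *: (E *m x) = J *m u by rewrite hEx mulmxBl hRu subr0.
split => //; last by rewrite -!mulmxA -/u hRu mulmx0.
by rewrite -!mulmxA -/u -hJu -scalemxAr mulmxA (psd_form_eq0 QE_sym hQEpsd hx) scaler0.
Qed.

Lemma regular_of_common_kernel :
  common_kernel_trivial E J Rm Q -> regular_pencil E ((J - Rm) *m Q).
Proof.
move=> C; apply/eqP => hdet.
have [L1 [L2 hL]] : exists L1 : 'M[R]_n, exists L2 : 'M[R]_(n, n + n),
    L1 *m E + L2 *m col_mx (Q^T *m J *m Q) (Q^T *m Rm *m Q) = 1%:M.
  apply: left_inverse_pair => w hE; rewrite mul_col_mx => /eqP.
  by rewrite col_mx_eq0 => /andP [/eqP ? /eqP ?]; apply: C.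
(* every s > 0 is an eigenvalue of L1 J Q *)
suff : char_poly (L1 *m J *m Q) = 0 by apply/eqP; rewrite monic_neq0 // char_poly_monic.
apply: poly_eq0_of_pos_roots => s sp; rewrite char_poly_horner.
have : (\det (pencil E ((J - Rm) *m Q))).[s] = 0 by rewrite hdet horner0.
rewrite pencil_horner => /det0_kernel [x xn hx].
have [hJx hZ hY] := pencil_kernel sp hx.
apply: (kernel_det0 xn); apply/eqP; rewrite mulmxBl mul_scalar_mx subr_eq0; apply/eqP.
have xE : L1 *m (E *m x) = x.
  rewrite -[RHS]mul1mx -hL mulmxDl -(mulmxA L1) -(mulmxA L2) mul_col_mx hZ hY.
  by rewrite col_mx0 mulmx0 addr0.
by rewrite -!mulmxA -hJx -scalemxAr xE.
Qed.

(* Regularity implies trivial common kernel: otherwise det(sE - (J-R)Q)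
   vanishes at every s > 0. *)
Lemma common_kernel_of_regular :
  regular_pencil E ((J - Rm) *m Q) -> common_kernel_trivial E J Rm Q.
Proof.
move=> hreg v hE hJ0 hR0; apply/eqP/negPn/negP => vn; move/eqP: hreg; apply.
apply: poly_eq0_of_pos_roots => x _.
by rewrite pencil_horner (pencil_singular x vn hE hJ0 hR0).
Qed.

End Regularity.

Definition deriv_vec (R : realType) n (y : R -> 'cV[R]_n) (t : R) : 'cV[R]_n :=
  \col_j derive1 (fun s => y s j 0) t.

Section Derivatives.
Variables (R : realType) (n : nat).
Implicit Types (y : R -> 'cV[R]_n) (t : R).

Lemma is_derive_sum_mul (a b : 'I_n -> R -> R) (da db : 'I_n -> R) t :
  (forall i, is_derive t 1 (a i) (da i)) -> (forall i, is_derive t 1 (b i) (db i)) ->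
  is_derive t 1 (fun s => \sum_i a i s * b i s) (\sum_i (a i t * db i + b i t * da i)).
Proof.
move=> ha hb; have -> : (fun s => \sum_i a i s * b i s) = \sum_i (a i * b i).
  by apply/funext => s; rewrite fct_sumE.
exact: is_derive_sum.
Qed.

Lemma is_derive_entry y t j : derivable (fun s => y s j 0) t 1 ->
  is_derive t 1 (fun s => y s j 0) (deriv_vec y t j 0).
Proof. by move=> h; rewrite mxE derive1E; apply: derivableP. Qed.

Lemma is_derive_mul_vec m (K : 'M[R]_(m, n)) y t i :
  (forall j, derivable (fun s => y s j 0) t 1) ->
  is_derive t 1 (fun s => (K *m y s) i 0) ((K *m deriv_vec y t) i 0).
Proof.
move=> hd; have -> : (fun s => (K *m y s) i 0) = (fun s => \sum_j cst (K i j) s * y s j 0).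
  by apply/funext => s; rewrite mxE.
apply: is_derive_eq.
  by apply: is_derive_sum_mul => j; exact: is_derive_entry.
by rewrite mxE; apply: eq_bigr => j _; rewrite mul0r mulr0 addr0.
Qed.

Lemma deriv_vec_mul m (K : 'M[R]_(m, n)) y t :
  (forall j, derivable (fun s => y s j 0) t 1) ->
  deriv_vec (fun s => K *m y s) t = K *m deriv_vec y t.
Proof.
move=> hd; apply/matrixP => i k; rewrite (ord1 k) mxE derive1E.
exact/derive_val/is_derive_mul_vec.
Qed.

Lemma form_sum (P : 'M[R]_n) (v w : 'cV[R]_n) :
  (v^T *m P *m w) 0 0 = \sum_j v j 0 * (P *m w) j 0.
Proof. by rewrite -mulmxA mxE; apply: eq_bigr => j _; rewrite mxE. Qed.

Lemma is_derive_form (P : 'M[R]_n) y t :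
  (forall j, derivable (fun s => y s j 0) t 1) ->
  is_derive t 1 (fun s => ((y s)^T *m P *m y s) 0 0)
    (((y t)^T *m P *m deriv_vec y t) 0 0 + ((deriv_vec y t)^T *m P *m y t) 0 0).
Proof.
move=> hd; have -> : (fun s => ((y s)^T *m P *m y s) 0 0) =
    (fun s => \sum_j (fun j s => y s j 0) j s * (fun j s => (P *m y s) j 0) j s).
  by apply/funext => s; rewrite form_sum.
apply: is_derive_eq.
  by apply: is_derive_sum_mul => j; [exact: is_derive_entry | exact: is_derive_mul_vec].
rewrite big_split /= !form_sum; congr (_ + _).
by apply: eq_bigr => j _; rewrite mulrC.
Qed.

End Derivatives.

Section Solutions.
Variables (R : realType) (n : nat) (E A : 'M[R]_n).

Lemma smooth_derivable (x : R -> 'cV[R]_n) : smooth_vec x ->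
  (forall j t, derivable (fun s => x s j 0) t 1) /\
  (forall j t, derivable (fun s => deriv_vec x s j 0) t 1).
Proof.
move=> hsm; split=> j t; first by have := hsm j 0 t; rewrite derive1n0.
have -> : (fun s => deriv_vec x s j 0) = (fun s => x s j 0)^`()%classic.
  by apply/funext => s; rewrite mxE.
by have := hsm j 1 t; rewrite derive1n1.
Qed.

Lemma solves_dae_deriv_vec (x : R -> 'cV[R]_n) :
  (forall j t, derivable (fun s => x s j 0) t 1) -> solves_dae E A x ->
  forall t, E *m deriv_vec x t = A *m x t.
Proof.
move=> hd hsol t; rewrite -deriv_vec_mul //; apply/matrixP => i k.
by rewrite (ord1 k) mxE; case: (hsol i t).
Qed.

Lemma deriv_vec_solution (y : R -> 'cV[R]_n) :
  (forall j t, derivable (fun s => y s j 0) t 1) ->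
  (forall j t, derivable (fun s => deriv_vec y s j 0) t 1) ->
  (forall t, E *m deriv_vec y t = A *m y t) ->
  forall t, E *m deriv_vec (deriv_vec y) t = A *m deriv_vec y t.
Proof.
move=> hd hd' hE t; rewrite -!deriv_vec_mul //; congr (deriv_vec _ t).
exact/funext/hE.
Qed.

End Solutions.

Section Energy.
Variables (R : realType) (n : nat) (E J Rm Q : 'M[R]_n).
Hypotheses (hJ : J^T = - J) (hRpsd : psd Rm) (hQE : Q^T *m E = E^T *m Q).

(* Along a solution y the energy y^T Q^T E y does not increase: its
   derivative is 2 (Qy)^T (J - R) Qy = -2 (Qy)^T R (Qy). *)
Lemma energy_nonincreasing (y : R -> 'cV[R]_n) :
  (forall j t, derivable (fun s => y s j 0) t 1) ->
  (forall t, E *m deriv_vec y t = (J - Rm) *m Q *m y t) ->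
  forall t, 0 <= t ->
  ((y t)^T *m (Q^T *m E) *m y t) 0 0 <= ((y 0)^T *m (Q^T *m E) *m y 0) 0 0.
Proof.
move=> hd hE t t0; set f := fun s => ((y s)^T *m (Q^T *m E) *m y s) 0 0.
have hf s : derivable f s 1 /\ f^`()%classic s <= 0.
  have hD := is_derive_form (Q^T *m E) (hd ^~ s); split; first exact: ex_derive.
  rewrite derive1E derive_val (form_sym _ (deriv_vec y s) (y s)); last exact: QE_sym.
  have -> : ((y s)^T *m (Q^T *m E) *m deriv_vec y s) 0 0
          = ((Q *m y s)^T *m ((J - Rm) *m (Q *m y s))) 0 0.
    by rewrite -(mulmxA (y s)^T) -(mulmxA Q^T) hE trmx_mul !mulmxA.
  by rewrite dissipation // -mulr2n mulrn_wle0 // oppr_le0.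
apply: (@ler0_derive1_le_cc R f 0 t) => //.
- by move=> s _; case: (hf s).
- by move=> s _; case: (hf s).
- by apply: derivable_within_continuous => s _; case: (hf s).
- by rewrite in_itv /= lexx t0.
- by rewrite in_itv /= lexx t0.
Qed.

End Energy.

Definition bounded_on_nonneg (R : realType) n (y : R -> 'cV[R]_n) : Prop :=
  exists M : R, forall t : R, 0 <= t -> forall i : 'I_n, `|y t i 0| <= M.

Section Bounded.
Variable R : realType.

Lemma bounded_add n (y z : R -> 'cV[R]_n) : bounded_on_nonneg y ->
  bounded_on_nonneg z -> bounded_on_nonneg (fun t => y t + z t).
Proof.
move=> [M hM] [N hN]; exists (M + N) => t t0 i; rewrite mxE.
exact: le_trans (ler_normD _ _) (lerD (hM t t0 i) (hN t t0 i)).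
Qed.

Lemma bounded_mul m n (K : 'M[R]_(m, n)) (y : R -> 'cV[R]_n) :
  bounded_on_nonneg y -> bounded_on_nonneg (fun t => K *m y t).
Proof.
move=> [M hM]; set M0 := Num.max M 0.
exists (\sum_i \sum_j `|K i j| * M0) => t t0 i; rewrite mxE.
apply: le_trans (ler_norm_sum _ _ _) _.
apply: (@le_trans _ _ (\sum_j `|K i j| * M0)).
  apply: ler_sum => j _; rewrite normrM ler_wpM2l //.
  by apply: le_trans (hM t t0 j) _; rewrite le_max lexx.
rewrite (bigD1 i) //= lerDl sumr_ge0 // => k _; rewrite sumr_ge0 // => j _.
by rewrite mulr_ge0 // le_max lexx orbT.
Qed.

(* A bounded energy y^T P y bounds P y, entrywise by Cauchy-Schwarz. *)
Lemma bounded_of_energy n (P : 'M[R]_n) (y : R -> 'cV[R]_n) (H : R) :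
  P^T = P -> psd P -> (forall t, 0 <= t -> ((y t)^T *m P *m y t) 0 0 <= H) ->
  bounded_on_nonneg (fun t => P *m y t).
Proof.
move=> hs hp hH; exists (1 + \tr P * H) => t t0 j.
have H0 : 0 <= H := le_trans (hp (y 0)) (hH 0 (lexx 0)).
apply: le_trans (norm_le_1_add_sqr _) _; rewrite lerD2l.
apply: le_trans (psd_entry hs hp (y t) j) _.
apply: (@le_trans _ _ (P j j * H)); first by rewrite ler_wpM2l ?psd_diag ?hH.
rewrite /mxtrace mulr_suml (bigD1 j) //= lerDl sumr_ge0 // => k _.
by rewrite mulr_ge0 ?psd_diag.
Qed.

End Bounded.

Section Stability.
Variables (R : realType) (n : nat) (E J Rm Q : 'M[R]_n).
Hypotheses (hJ : J^T = - J) (hR : Rm^T = Rm) (hRpsd : psd Rm).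
Hypotheses (hQE : Q^T *m E = E^T *m Q) (hQEpsd : psd (Q^T *m E)).
Hypotheses (C : common_kernel_trivial E J Rm Q)
  (hK : forall v : 'cV[R]_n, Q *m v = 0 -> E *m v = 0).

Lemma Q_unitmx : Q \in unitmx.
Proof.
apply: unitmx_of_injective => v hv.
by apply: C; rewrite ?hK // -mulmxA hv mulmx0.
Qed.

(* E and (J - R)Q have no common kernel vector: dissipation forces R Q w = 0
   and then J Q w = 0. *)
Lemma E_pencil_injective (w : 'cV[R]_n) :
  E *m w = 0 -> (J - Rm) *m Q *m w = 0 -> w = 0.
Proof.
move=> hE hA; set u := Q *m w.
have : (u^T *m ((J - Rm) *m u)) 0 0 = 0 by rewrite /u (mulmxA (J - Rm)) hA mulmx0 mxE.
rewrite dissipation // => /eqP; rewrite oppr_eq0 => /eqP /(psd_form_eq0 hR hRpsd) hRu.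
have hJu : J *m u = 0 by move: hA; rewrite -mulmxA mulmxBl hRu subr0.
by apply: C; rewrite // -!mulmxA -/u ?hJu ?hRu mulmx0.
Qed.

(* Every smooth solution x is bounded: x = N1 (Q^T E x) + N2 (Q^T E x') with
   constant N1, N2, and both energy vectors have nonincreasing energy. *)
Lemma stable_of_common_kernel : stable_pencil E ((J - Rm) *m Q).
Proof.
move=> x /smooth_derivable [hd hd'] hsol.
have hE0 := solves_dae_deriv_vec hd hsol.
have hE1 := deriv_vec_solution hd hd' hE0.
have [L1 [L2 hL]] := left_inverse_pair E_pencil_injective.
have hEP (z : 'cV[R]_n) : E *m z = invmx Q^T *m (Q^T *m E *m z).
  by rewrite !mulmxA mulVmx ?mul1mx // unitmx_tr Q_unitmx.
have -> : x = fun t => (L1 *m invmx Q^T) *m (Q^T *m E *m x t)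
                      + (L2 *m invmx Q^T) *m (Q^T *m E *m deriv_vec x t).
  apply/funext => t; rewrite -(mulmxA L1) -(mulmxA L2) -!hEP hE0.
  by rewrite (mulmxA L1) (mulmxA L2) -mulmxDl hL mul1mx.
apply: bounded_add; apply: bounded_mul;
  apply: (bounded_of_energy (QE_sym hQE) hQEpsd); exact: (energy_nonincreasing hJ hRpsd hQE).
Qed.

End Stability.

Theorem corollary9 (R : realType) (n : nat) (E J Rm Q : 'M[R]_n)
  (hJ : J^T = - J) (hR : Rm^T = Rm) (hRpsd : psd Rm)
  (hQE : Q^T *m E = E^T *m Q) (hQEpsd : psd (Q^T *m E)) :
  (regular_pencil E ((J - Rm) *m Q) <->
     (forall v : 'cV[R]_n, E *m v = 0 -> (Q^T *m J *m Q) *m v = 0 ->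
        (Q^T *m Rm *m Q) *m v = 0 -> v = 0)) /\
  ((forall v : 'cV[R]_n, E *m v = 0 -> (Q^T *m J *m Q) *m v = 0 ->
        (Q^T *m Rm *m Q) *m v = 0 -> v = 0) ->
   (forall v : 'cV[R]_n, Q *m v = 0 -> E *m v = 0) ->
   stable_pencil E ((J - Rm) *m Q)).
Proof.
split; first split.
- exact: common_kernel_of_regular.
- exact: regular_of_common_kernel.
- exact: stable_of_common_kernel.
Qed.
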